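(* Let $X,Y$ be compact metric spaces, $\epsilon\ge0$, and $X_\epsilon, Y_\epsilon$ finite $\epsilon$-nets of $X$ and $Y$. Let $f:X_\epsilon\to Y_\epsilon$ and $g:Y_\epsilon\to X_\epsilon$ satisfy $\frac12\max\{\operatorname{dis}(f),\operatorname{dis}(g)\}=\widehat{d}_{\mathrm{GH}}(X_\epsilon,Y_\epsilon)$. Define subsets $X_k\subseteq X_\epsilon$ by $X_0=X_\epsilon$, $X_1=g(Y_\epsilon)$, $X_k=(g\circ f)(X_{k-2})$ for $k>1$ (with the restricted metric). Let $\delta\ge0$. If $d_{\mathrm{GH}}(X_k,X_{k+1})\le\delta$ for some $k\ge0$, then $d_{\mathrm{GH}}(X,Y)\le(2k+1)\widehat{d}_{\mathrm{GH}}(X,Y)+(2k+2)\epsilon+\delta$.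
   Context: An $\epsilon$-net of $X$ is a subset such that every point of $X$ is within distance $\le\epsilon$ of it. For $f:X\to Y$, $\operatorname{dis}(f)=\sup_{x,x'}|d_X(x,x')-d_Y(f(x),f(x'))|$; $\operatorname{codis}(f,g)=\sup_{x,y}|d_X(x,g(y))-d_Y(f(x),y)|$. $d_{\mathrm{GH}}$ is the Gromov--Hausdorff distance, equal to $\frac12\inf_{f,g}\max\{\operatorname{dis}(f),\operatorname{dis}(g),\operatorname{codis}(f,g)\}$; $\widehat{d}_{\mathrm{GH}}(X,Y)=\frac12\max\{\inf_{f:X\to Y}\operatorname{dis}(f),\inf_{g:Y\to X}\operatorname{dis}(g)\}$. *)

From HB Require Import structures.
From mathcomp Require Import all_boot all_order all_algebra.
From mathcomp Require Import all_classical all_reals all_analysis.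
Unset Printing Implicit Defensive.
Import Order.TTheory GRing.Theory Num.Theory numFieldNormedType.Exports.
Local Open Scope classical_set_scope.
Local Open Scope ring_scope.

Section GH.
Variable R : realType.

Definition is_metric {T : Type} (d : T -> T -> R) : Prop :=
  (forall x y, d x y = 0 <-> x = y) /\
  (forall x y, d x y = d y x) /\
  (forall x y z, d x z <= d x y + d y z).

(* compactness of the metric space (T, d) (sequential compactness,
   equivalent to compactness for metric spaces) *)
Definition metric_compact {T : Type} (d : T -> T -> R) : Prop :=
  forall u : nat -> T, exists (phi : nat -> nat) (x : T),
    (forall n, (phi n < phi n.+1)%N) /\
    ((fun n : nat => d (u (phi n)) x) @ \oo --> (0 : R^o)).

Definition is_enet {T : Type} (d : T -> T -> R) (N : set T) (eps : R) : Prop :=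
  forall x, exists2 y, N y & d x y <= eps.

Definition GHsub {T : Type} (A : set T) := {x : T | A x}.
Definition GHrestr {T : Type} (d : T -> T -> R) (A : set T) (a b : GHsub A) : R :=
  d (proj1_sig a) (proj1_sig b).

(* distortion; the sup includes 0 so that the empty map has distortion 0 *)
Definition GHdis {T U : Type} (dT : T -> T -> R) (dU : U -> U -> R) (f : T -> U)
  : \bar R :=
  ereal_sup ([set 0%E] `|`
    [set e | exists x x', e = (`|dT x x' - dU (f x) (f x')|)%:E]).

Definition GHcodis {T U : Type} (dT : T -> T -> R) (dU : U -> U -> R)
  (f : T -> U) (g : U -> T) : \bar R :=
  ereal_sup ([set 0%E] `|`
    [set e | exists x y, e = (`|dT x (g y) - dU (f x) y|)%:E]).

Definition dGH {T U : Type} (dT : T -> T -> R) (dU : U -> U -> R) : \bar R :=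
  ((2^-1)%:E * ereal_inf [set e | exists (f : T -> U) (g : U -> T),
     e = maxe (GHdis dT dU f) (maxe (GHdis dU dT g) (GHcodis dT dU f g))])%E.

Definition hdGH {T U : Type} (dT : T -> T -> R) (dU : U -> U -> R) : \bar R :=
  ((2^-1)%:E * maxe (ereal_inf [set GHdis dT dU f | f in [set: T -> U]])
                    (ereal_inf [set GHdis dU dT g | g in [set: U -> T]]))%E.

(* (X_k, X_{k+1}) : X_0 = setT, X_1 = g(setT), X_{k+2} = (g \o f)(X_k) *)
Fixpoint GHXpair {A B : Type} (f : A -> B) (g : B -> A) (k : nat)
  : set A * set A :=
  match k with
  | 0 => (setT, g @` setT)
  | k'.+1 => let p := GHXpair f g k' in (p.2, (g \o f) @` p.1)
  end.
Definition GHXk {A B : Type} (f : A -> B) (g : B -> A) (k : nat) : set A :=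
  (GHXpair f g k).1.

End GH.
Arguments is_metric {R T}.
Arguments metric_compact {R T}.
Arguments is_enet {R T}.
Arguments GHrestr {R T}.
Arguments GHdis {R T U}.
Arguments GHcodis {R T U}.
Arguments dGH {R T U}.
Arguments hdGH {R T U}.

From HB Require Import structures.
From mathcomp Require Import all_boot all_order all_algebra.
From mathcomp Require Import all_classical all_reals all_analysis.
From mathcomp Require Import lra.
Import Order.TTheory GRing.Theory Num.Theory.
Local Open Scope classical_set_scope.
Local Open Scope ring_scope.

(* Any map [X -> Y] followed by a nearest-point projection onto [Y_eps] has
   distortion at most 2 eps more, so the optimality of [f] and [g] bounds
   both distortions by [c = 2 hdGH(X, Y) + 2 eps].  The set [X_j] is the image
   of [X_eps] (j even) or of [Y_eps] (j odd) under an alternating composite of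
   j copies of [f] and [g], hence is coupled to that net with distortion at
   most [j c].  Chaining the nets through [X_k] and [X_(k+1)] couples them with
   distortion [(2k+1) c + 2 delta], and projecting [X] and [Y] onto the nets
   costs another [2 eps]; halving gives the bound. *)

Section Distortion.
Context {R : realType}.

Definition dis_le {U V : Type} (dU : U -> U -> R) (dV : V -> V -> R)
    (P : U -> V) (r : R) : Prop :=
  forall x x', `|dU x x' - dV (P x) (P x')| <= r.

Lemma dis_le_comp {U V W : Type} {dU : U -> U -> R} {dV : V -> V -> R}
    {dW : W -> W -> R} {P : U -> V} {Q : V -> W} {a b : R} :
  dis_le dU dV P a -> dis_le dV dW Q b -> dis_le dU dW (Q \o P) (a + b).
Proof.
move=> hP hQ x x'; apply: le_trans (ler_distD (dV (P x) (P x')) _ _) _.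
exact: lerD.
Qed.

Lemma dis_le_iter {U : Type} {dU : U -> U -> R} {h : U -> U} {c : R}
    (n : nat) :
  dis_le dU dU h c -> dis_le dU dU (iter n h) (n%:R * c).
Proof.
move=> hc; elim: n => [|n IH] x x' /=; first by rewrite subrr normr0 mul0r.
by rewrite -[n.+1]addn1 natrD mulrDl mul1r; exact: (dis_le_comp IH hc x x').
Qed.

Lemma GHdis_ge0 {U V : Type} (dU : U -> U -> R) (dV : V -> V -> R)
    (P : U -> V) :
  (0 <= GHdis dU dV P)%E.
Proof. by apply: ereal_sup_ubound; left. Qed.

Lemma GHdis_leP {U V : Type} (dU : U -> U -> R) (dV : V -> V -> R)
    (P : U -> V) (r : R) :
  0 <= r -> (GHdis dU dV P <= r%:E)%E <-> dis_le dU dV P r.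
Proof.
move=> r0; split => [hP x x' | hP].
  rewrite -lee_fin; apply: le_trans hP.
  by apply: ereal_sup_ubound; right; exists x, x'.
by apply: ge_ereal_sup => _ [->|[x [x' ->]]]; rewrite lee_fin.
Qed.

End Distortion.

Section Coupling.
Context {R : realType}.

(* The pairs [(f, g)] of the infimum defining [dGH], with a real bound. *)
Definition gh_coupled {U V : Type} (dU : U -> U -> R) (dV : V -> V -> R)
    (r : R) : Prop :=
  exists (P : U -> V) (Q : V -> U),
    [/\ dis_le dU dV P r, dis_le dV dU Q r &
        forall x y, `|dU x (Q y) - dV (P x) y| <= r].

Lemma gh_coupled_le {U V : Type} {dU : U -> U -> R} {dV : V -> V -> R}
    {r s : R} :
  r <= s -> gh_coupled dU dV r -> gh_coupled dU dV s.
Proof.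
move=> rs [P [Q [hP hQ hPQ]]]; exists P, Q.
by split=> x y; apply: le_trans rs.
Qed.

Lemma gh_coupled_comp {U V W : Type} {dU : U -> U -> R} {dV : V -> V -> R}
    {dW : W -> W -> R} {a b : R} :
  gh_coupled dU dV a -> gh_coupled dV dW b -> gh_coupled dU dW (a + b).
Proof.
move=> [P1 [Q1 [hP1 hQ1 hPQ1]]] [P2 [Q2 [hP2 hQ2 hPQ2]]].
exists (P2 \o P1), (Q1 \o Q2); split.
- exact: dis_le_comp.
- by rewrite addrC; exact: dis_le_comp.
- move=> x y; apply: le_trans (ler_distD (dV (P1 x) (Q2 y)) _ _) _.
  exact: lerD (hPQ1 _ _) (hPQ2 _ _).
Qed.

Lemma gh_coupled_sym {U V : Type} {dU : U -> U -> R} {dV : V -> V -> R}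
    {r : R} :
  (forall x y, dU x y = dU y x) -> (forall x y, dV x y = dV y x) ->
  gh_coupled dU dV r -> gh_coupled dV dU r.
Proof.
move=> sU sV [P [Q [hP hQ hPQ]]]; exists Q, P; split=> // y x.
by rewrite sU sV distrC.
Qed.

Lemma gh_coupled_image {U W : Type} {dU : U -> U -> R} {dW : W -> W -> R}
    {s : U -> W} {a : R} :
  dis_le dU dW s a -> gh_coupled dU (GHrestr dW (s @` setT)) a.
Proof.
move=> hs.
have preim (w : GHsub (s @` setT)) : {u | s u = sval w}.
  by apply: cid; case: (svalP w) => u _ <-; exists u.
pose Q w := sval (preim w).
have sQ w : s (Q w) = sval w by exact: svalP (preim w).
exists (fun u => exist _ (s u) (imageT s u)), Q.
rewrite /GHrestr; split=> [x x' | w w' | x w] /=.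
- exact: hs.
- by rewrite -!sQ distrC.
- by rewrite -sQ.
Qed.

Lemma dGH_le_gh_coupled {U V : Type} {dU : U -> U -> R} {dV : V -> V -> R}
    {r : R} :
  0 <= r -> gh_coupled dU dV r -> (dGH dU dV <= (r / 2)%:E)%E.
Proof.
move=> r0 [P [Q [hP hQ hPQ]]].
rewrite /dGH lee_pdivrMl // -EFinM mulrC divfK ?pnatr_eq0 //.
apply: le_trans (ereal_inf_lbound _) _; first by exists P, Q.
rewrite !ge_max; apply/and3P; split; try exact/(GHdis_leP _ _ _ _ r0).
by apply: ge_ereal_sup => _ [->|[x [y ->]]]; rewrite lee_fin.
Qed.

Lemma gh_coupled_dGH_le {U V : Type} {dU : U -> U -> R} {dV : V -> V -> R}
    {del t : R} :
  (dGH dU dV <= del%:E)%E -> 0 < t -> gh_coupled dU dV (2 * del + t).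
Proof.
rewrite /dGH lee_pdivrMl // -EFinM => hdel t0.
have /ereal_inf_lt [_ [P [Q ->]]] : (ereal_inf [set e | exists f g,
    e = maxe (GHdis dU dV f) (maxe (GHdis dV dU g) (GHcodis dU dV f g))]
    < (2 * del + t)%:E)%E.
  by apply: le_lt_trans hdel _; rewrite lte_fin ltrDl.
rewrite !gt_max => /and3P [hP hQ hPQ].
have le_sup_lt (S : set \bar R) y :
    S y -> (ereal_sup S < (2 * del + t)%:E)%E -> (y <= (2 * del + t)%:E)%E.
  by move=> Sy /ltW; apply: le_trans; apply: ereal_sup_ubound.
exists P, Q; split=> [x x' | y y' | x y]; rewrite -lee_fin.
- by apply: le_sup_lt hP; right; exists x, x'.
- by apply: le_sup_lt hQ; right; exists y, y'.
- by apply: le_sup_lt hPQ; right; exists x, y.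
Qed.

End Coupling.

Section Metric.
Context {R : realType} {T : Type} {d : T -> T -> R}.
Hypothesis md : is_metric d.

Lemma metric_sym x y : d x y = d y x.
Proof. by case: md => _ []. Qed.

Lemma metric_distBl x y z : `|d x z - d y z| <= d x y.
Proof.
have [_ [_ tri]] := md; rewrite ler_norml.
have := tri x y z; have := tri y x z; rewrite (metric_sym y x); lra.
Qed.

Lemma metric_distBr x y z : `|d z x - d z y| <= d x y.
Proof. by rewrite !(metric_sym z); exact: metric_distBl. Qed.

Lemma metric_distB x y x' y' : `|d x y - d x' y'| <= d x x' + d y y'.
Proof.
apply: le_trans (ler_distD (d x' y) _ _) _.
exact: lerD (metric_distBl _ _ _) (metric_distBr _ _ _).
Qed.

Context {N : set T} {eps : R}.
Hypothesis hN : is_enet d N eps.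

Definition net_proj (x : T) : GHsub N :=
  let w := cid2 (hN x) in exist _ (s2val w) (s2valP w).

Lemma net_projP x : d x (sval (net_proj x)) <= eps.
Proof. by rewrite /net_proj /=; case: (cid2 (hN x)). Qed.

Lemma dis_le_net_proj : dis_le d (GHrestr d N) net_proj (2 * eps).
Proof.
move=> x x'; apply: le_trans (metric_distB _ _ _ _) _.
by have := net_projP x; have := net_projP x'; lra.
Qed.

End Metric.

Lemma GHrestr_sym {R : realType} {T : Type} {d : T -> T -> R} (A : set T) :
  (forall x y, d x y = d y x) -> forall a b, GHrestr d A a b = GHrestr d A b a.
Proof. by move=> sd a b; exact: sd. Qed.

Lemma gh_coupled_nets {R : realType} {TX TY : Type} {dX : TX -> TX -> R}
    {dY : TY -> TY -> R} {eps : R} {Xe : set TX} {Ye : set TY}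
    (mX : is_metric dX) (mY : is_metric dY)
    (nX : is_enet dX Xe eps) (nY : is_enet dY Ye eps) {r : R} :
  gh_coupled (GHrestr dX Xe) (GHrestr dY Ye) r ->
  gh_coupled dX dY (r + 2 * eps).
Proof.
move=> [P [Q [hP hQ hPQ]]].
exists (sval \o P \o net_proj nX), (sval \o Q \o net_proj nY); split.
- rewrite addrC; exact: dis_le_comp (dis_le_net_proj mX nX)
    (hP : dis_le _ dY (sval \o P) r).
- rewrite addrC; exact: dis_le_comp (dis_le_net_proj mY nY)
    (hQ : dis_le _ dX (sval \o Q) r).
- move=> x y /=; set p := net_proj nX x; set q := net_proj nY y.
  have hx := net_projP nX x; have hy := net_projP nY y; have hpq := hPQ p q.
  have := metric_distBl mX x (sval p) (sval (Q q)).
  have := metric_distBr mY (sval q) y (sval (P p)).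
  rewrite (metric_sym mY (sval q)) => hY hX.
  apply: le_trans (ler_distD (dX (sval p) (sval (Q q))) _ _) _.
  apply: le_trans (lerD (lexx _) (ler_distD (dY (sval (P p)) (sval q)) _ _)) _.
  move: hpq; rewrite /GHrestr; lra.
Qed.

Section DistortionInfimum.
Context {R : realType}.

Definition dis_inf {U V : Type} (dU : U -> U -> R) (dV : V -> V -> R)
    : \bar R :=
  ereal_inf [set GHdis dU dV P | P in [set: U -> V]].

Lemma hdGHE {U V : Type} (dU : U -> U -> R) (dV : V -> V -> R) :
  hdGH dU dV = ((2^-1)%:E * maxe (dis_inf dU dV) (dis_inf dV dU))%E.
Proof. by []. Qed.

Lemma maxe_dis_inf_ge0 {U V : Type} (dU : U -> U -> R) (dV : V -> V -> R) :
  (0 <= maxe (dis_inf dU dV) (dis_inf dV dU))%E.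
Proof.
rewrite le_max; apply/orP; left.
by apply/ereal_infP => _ [P _ <-]; exact: GHdis_ge0.
Qed.

Context {TX TY : Type} {dX : TX -> TX -> R} {dY : TY -> TY -> R} {eps : R}.
Context {Ye : set TY}.
Hypotheses (mY : is_metric dY) (heps : 0 <= eps) (nY : is_enet dY Ye eps).

Lemma GHdis_net_proj_le (Xe : set TX) (P : TX -> TY) :
  (GHdis (GHrestr dX Xe) (GHrestr dY Ye) (net_proj nY \o P \o sval)
     <= GHdis dX dY P + (2 * eps)%:E)%E.
Proof.
case hP: (GHdis dX dY P) => [r| |].
- have r0 : 0 <= r by rewrite -lee_fin -hP GHdis_ge0.
  have /(GHdis_leP _ _ _ _ r0) hPr : (GHdis dX dY P <= r%:E)%E by rewrite hP.
  have hPs : dis_le (GHrestr dX Xe) dY (P \o sval) r.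
    by move=> a a'; exact: hPr.
  rewrite -EFinD; apply/(GHdis_leP _ _ _ _ _).2.
    by rewrite addr_ge0 ?mulr_ge0.
  exact: dis_le_comp hPs (dis_le_net_proj mY nY).
- by rewrite addye ?leey.
- by have := GHdis_ge0 dX dY P; rewrite hP.
Qed.

Lemma dis_inf_net_le (Xe : set TX) :
  (dis_inf (GHrestr dX Xe) (GHrestr dY Ye) <= dis_inf dX dY + (2 * eps)%:E)%E.
Proof.
rewrite -leeBlDr //; apply/ereal_infP => _ [P _ <-].
rewrite leeBlDr //; apply: le_trans (GHdis_net_proj_le Xe P).
by apply: ereal_inf_lbound; exists (net_proj nY \o P \o sval).
Qed.

End DistortionInfimum.

Lemma maxe_GHdis_opt_le {R : realType} {TX TY : Type} {dX : TX -> TX -> R}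
    {dY : TY -> TY -> R} {eps : R} {Xe : set TX} {Ye : set TY}
    (mX : is_metric dX) (mY : is_metric dY) (heps : 0 <= eps)
    (nX : is_enet dX Xe eps) (nY : is_enet dY Ye eps)
    (f : GHsub Xe -> GHsub Ye) (g : GHsub Ye -> GHsub Xe) :
  ((2^-1)%:E * maxe (GHdis (GHrestr dX Xe) (GHrestr dY Ye) f)
                    (GHdis (GHrestr dY Ye) (GHrestr dX Xe) g)
     = hdGH (GHrestr dX Xe) (GHrestr dY Ye))%E ->
  (maxe (GHdis (GHrestr dX Xe) (GHrestr dY Ye) f)
        (GHdis (GHrestr dY Ye) (GHrestr dX Xe) g)
     <= maxe (dis_inf dX dY) (dis_inf dY dX) + (2 * eps)%:E)%E.
Proof.
rewrite hdGHE => /(congr1 (fun z => 2%:E * z)%E).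
rewrite /= !muleA -EFinM divff // !mul1e => ->.
rewrite ge_max; apply/andP; split.
- apply: le_trans (dis_inf_net_le mY heps nY Xe) _.
  by apply: leeD2r; rewrite le_max lexx.
- apply: le_trans (dis_inf_net_le mX heps nX Ye) _.
  by apply: leeD2r; rewrite le_max lexx orbT.
Qed.

Section Iterates.
Context {A B : Type} (f : A -> B) (g : B -> A).

Lemma GHXpair_double j :
  GHXpair f g j.*2 = (iter j (g \o f) @` setT, (g \o iter j (f \o g)) @` setT).
Proof. by elim: j => [|j IH] /=; rewrite ?image_id // IH /= !image_comp. Qed.

Lemma GHXk_double j : GHXk f g j.*2 = iter j (g \o f) @` setT.
Proof. by rewrite /GHXk GHXpair_double. Qed.

Lemma GHXk_doubleS j : GHXk f g j.*2.+1 = (g \o iter j (f \o g)) @` setT.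
Proof. by rewrite /GHXk /= GHXpair_double. Qed.

End Iterates.

Section Chain.
Context {R : realType} {TX TY : Type}.
Context {dX : TX -> TX -> R} {dY : TY -> TY -> R}.
Hypotheses (mX : is_metric dX) (mY : is_metric dY).
Context {Xe : set TX} {Ye : set TY}.
Context {f : GHsub Xe -> GHsub Ye} {g : GHsub Ye -> GHsub Xe} {c : R}.

Local Notation dXe := (GHrestr dX Xe).
Local Notation dYe := (GHrestr dY Ye).
Local Notation dXk k := (GHrestr dXe (GHXk f g k)).

Hypotheses (hf : dis_le dXe dYe f c) (hg : dis_le dYe dXe g c).

Lemma gh_coupled_Xk_double j : gh_coupled dXe (dXk j.*2) (j.*2%:R * c).
Proof.
rewrite GHXk_double -addnn natrD mulrDl -mulrDr.
exact/gh_coupled_image/dis_le_iter/(dis_le_comp hf hg).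
Qed.

Lemma gh_coupled_Xk_doubleS j : gh_coupled dYe (dXk j.*2.+1) (j.*2.+1%:R * c).
Proof.
rewrite GHXk_doubleS -addn1 -addnn !natrD !mulrDl -mulrDr mul1r.
exact/gh_coupled_image/(dis_le_comp (dis_le_iter j (dis_le_comp hg hf)) hg).
Qed.

Lemma gh_coupled_Xk_step {k : nat} {delta t : R} :
  (dGH (dXk k) (dXk k.+1) <= delta%:E)%E -> 0 < t ->
  gh_coupled dXe dYe ((2 * k + 1)%:R * c + (2 * delta + t)).
Proof.
have symXk j : forall a b, dXk j a b = dXk j b a.
  exact/GHrestr_sym/GHrestr_sym/(metric_sym mX).
have symYe := GHrestr_sym Ye (metric_sym mY).
rewrite -(odd_double_half k); case: (odd k); move: k./2 => j /=.
- rewrite add1n -doubleS => hk t0.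
  have C := gh_coupled_sym (symXk _) (symXk _) (gh_coupled_dGH_le hk t0).
  have D := gh_coupled_sym symYe (symXk _) (gh_coupled_Xk_doubleS j).
  apply: gh_coupled_le (gh_coupled_comp (gh_coupled_comp
    (gh_coupled_Xk_double j.+1) C) D).
  rewrite -!muln2 !natrD !natrM; lra.
- rewrite add0n => hk t0.
  have C := gh_coupled_dGH_le hk t0.
  have D := gh_coupled_sym symYe (symXk _) (gh_coupled_Xk_doubleS j).
  apply: gh_coupled_le (gh_coupled_comp (gh_coupled_comp
    (gh_coupled_Xk_double j) C) D).
  rewrite -!muln2 !natrD !natrM; lra.
Qed.

End Chain.

Theorem claim3 (R : realType) (TX TY : Type)
  (dX : TX -> TX -> R) (dY : TY -> TY -> R)
  (mX : is_metric dX) (mY : is_metric dY)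
  (cX : metric_compact dX) (cY : metric_compact dY)
  (eps : R) (heps : 0 <= eps)
  (Xe : set TX) (Ye : set TY) (fXe : finite_set Xe) (fYe : finite_set Ye)
  (nX : is_enet dX Xe eps) (nY : is_enet dY Ye eps)
  (f : GHsub Xe -> GHsub Ye) (g : GHsub Ye -> GHsub Xe)
  (hopt : ((2^-1)%:E * maxe (GHdis (GHrestr dX Xe) (GHrestr dY Ye) f)
                            (GHdis (GHrestr dY Ye) (GHrestr dX Xe) g)
           = hdGH (GHrestr dX Xe) (GHrestr dY Ye))%E)
  (delta : R) (hdelta : 0 <= delta) (k : nat)
  (hk : (dGH (GHrestr (GHrestr dX Xe) (GHXk f g k))
             (GHrestr (GHrestr dX Xe) (GHXk f g k.+1)) <= delta%:E)%E) :
  (dGH dX dY <= ((2 * k + 1)%:R)%:E * hdGH dX dY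
                + ((2 * k + 2)%:R * eps + delta)%:E)%E.
Proof.
have hfg := maxe_GHdis_opt_le mX mY heps nX nY f g hopt.
move: (maxe_dis_inf_ge0 dX dY) hfg; rewrite hdGHE.
case: (maxe (dis_inf dX dY) (dis_inf dY dX)) => [m | _ _ | //].
- rewrite lee_fin -EFinD => m0 hfg; set c := m + 2 * eps.
  have c0 : 0 <= c by rewrite /c; lra.
  have [hf hg] : dis_le (GHrestr dX Xe) (GHrestr dY Ye) f c /\
                 dis_le (GHrestr dY Ye) (GHrestr dX Xe) g c.
    move: hfg; rewrite ge_max => /andP [].
    by move=> /(GHdis_leP _ _ _ _ c0) ? /(GHdis_leP _ _ _ _ c0).
  apply/lee_addgt0Pr => t t0.
  have C := gh_coupled_nets mX mY nX nY (gh_coupled_Xk_step mX mY hf hg hk t0).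
  apply: le_trans (dGH_le_gh_coupled _ C) _.
    by rewrite addr_ge0 ?mulr_ge0 ?addr_ge0 ?mulr_ge0 // ltW.
  rewrite -!EFinM -!EFinD lee_fin !natrD /c; lra.
- rewrite mulry gtr0_sg ?invr_gt0 // mul1e mulry gtr0_sg ?ltr0n ?addn1 // mul1e.
  by rewrite addye // leey.
Qed.
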